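(* Let $\mathbf{S} = [s_{ij}] \in \mathbb{R}^{m_q \times m}$ be the similarity matrix between a query vector set $\mathbf{Q}=\{\mathbf{q}_1,\dots,\mathbf{q}_{m_q}\}$ and a target vector set $\mathbf{T}=\{\mathbf{t}_1,\dots,\mathbf{t}_m\}$, with entries $s_{ij}\in[0,1]$, and let $s_{\max} = \max_{i,j} s_{ij}$. Let $\hat{\mathbf{S}} = [\hat S_{ij}]$ be the estimated similarity matrix obtained from $L \in \mathbb{Z}^+$ hash functions of a locality-sensitive hashing family (so that each estimated entry $\hat S_{ij}$ is distributed as $L^{-1}\mathcal{B}(s_{ij}, L)$, i.e. $L\hat S_{ij}$ is binomial with $L$ trials and success probability $s_{ij}$). Let $\tau_1 \in (s_{\max}, 1)$ and $\Delta_1 = \tau_1 - s_{\max}$. Then $$\Pr\big[\sigma(\hat{\mathbf{S}}) \geq s_{\max} + \Delta_1\big] \leq m_q m\, \gamma^L, \qquad \text{where } \gamma = \left(\frac{s_{\max}(1-\tau_1)}{\tau_1(1-s_{\max})}\right)^{\tau_1}\left(\frac{1-s_{\max}}{1-\tau_1}\right),$$ and $\sigma(\mathbf{A}) = \min\big(\min_i \max_j a_{ij}, \min_j \max_i a_{ij}\big)$ for a matrix $\mathbf{A}=[a_{ij}] \in \mathbb{R}^{m_q\times m}$.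
   Context: A locality-sensitive hash function $h$ satisfies $\Pr(h(\mathbf{a})=h(\mathbf{b})) = \operatorname{sim}(\mathbf{a},\mathbf{b}) \in [0,1]$. With $L$ such hash functions, the estimated similarity of a pair of vectors is the fraction of the $L$ hash functions on which they collide, hence a scaled binomial $L^{-1}\mathcal{B}(\operatorname{sim}, L)$. Vectors are $L2$-normalized and $\operatorname{sim}(\mathbf{q},\mathbf{v}) = \mathbf{q}^T\mathbf{v}$. *)

From HB Require Import structures.
From mathcomp Require Import all_boot all_order all_algebra.
From mathcomp Require Import all_classical all_reals all_analysis.
Set Implicit Arguments. Unset Strict Implicit. Unset Printing Implicit Defensive.
Import Order.TTheory GRing.Theory Num.Theory.
Local Open Scope ring_scope.

(* Maximum / minimum of a real-valued function over a finite type.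
   For a nonempty index type this is the genuine max / min (the seed
   value is f applied to the first element, which is idempotent). *)
Definition fmax {R : realType} (I : finType) (f : I -> R) : R :=
  \big[Num.max/head 0 (map f (enum I))]_(i : I) f i.
Definition fmin {R : realType} (I : finType) (f : I -> R) : R :=
  \big[Num.min/head 0 (map f (enum I))]_(i : I) f i.

Definition sigma {R : realType} (mq m : nat) (A : 'M[R]_(mq, m)) : R :=
  Num.min (fmin (fun i : 'I_mq => fmax (fun j : 'I_m => A i j)))
          (fmin (fun j : 'I_m => fmax (fun i : 'I_mq => A i j))).

Definition smax {R : realType} (mq m : nat) (S : 'M[R]_(mq, m)) : R :=
  fmax (fun ij : 'I_mq * 'I_m => S ij.1 ij.2).

From HB Require Import structures.
From mathcomp Require Import all_boot all_order all_algebra.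
From mathcomp Require Import all_classical all_reals all_analysis.
From mathcomp Require Import ring lra.
Import Order.TTheory GRing.Theory Num.Theory.
Local Open Scope ring_scope.
Local Open Scope classical_set_scope.

(* sigma(S^) never exceeds the largest entry of a fixed row i0, so the event
   sigma(S^) >= tau1 is covered by the m events S^_(i0, j) >= tau1.  Each
   L * S^_(i0, j) is Bin(L, p) with p <= s_max, and the Chernoff bound
   Pr[Bin(L, p) >= tau L] <= (e^(-t tau) (1 - p + p e^t))^L, taken at the
   optimal e^t = tau (1 - s_max) / (s_max (1 - tau)), is exactly gamma^L.
   The union bound then gives m gamma^L <= mq m gamma^L. *)

Section fmax_fmin.
Context {R : realType} {I : finType}.
Implicit Type f : I -> R.

Lemma le_fmax f i : f i <= fmax f.
Proof. by rewrite /fmax (bigD1 i) //= le_max lexx. Qed.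

Lemma fmin_le f i : fmin f <= f i.
Proof. by rewrite /fmin (bigD1 i) //= ge_min lexx. Qed.

Lemma eq_fmax (i0 : I) f : exists i, fmax f = f i.
Proof.
rewrite /fmax; apply: (big_ind (fun x => exists i, x = f i)).
- have : i0 \in enum I by rewrite mem_enum.
  by case: (enum I) => [//|i r] _; exists i.
- by move=> _ _ [i ->] [j ->]; rewrite maxEle; case: ifP => _; eexists.
- by move=> i _; exists i.
Qed.

End fmax_fmin.

Lemma sigma_le_fmax_row {R : realType} {mq m : nat} (A : 'M[R]_(mq, m)) i :
  sigma A <= fmax (fun j => A i j).
Proof. by rewrite /sigma ge_min (fmin_le (fun i => fmax _) i). Qed.

Section measurable_fmax.
Context {d} {T : measurableType d} {R : realType}.

Lemma measurable_fun_big (op : R -> R -> R) (I : Type) (r : seq I)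
    (x0 : T -> R) (F : I -> T -> R) :
  (forall f g : T -> R, measurable_fun setT f -> measurable_fun setT g ->
     measurable_fun setT (fun w => op (f w) (g w))) ->
  measurable_fun setT x0 -> (forall i, measurable_fun setT (F i)) ->
  measurable_fun setT (fun w => \big[op/x0 w]_(i <- r) F i w).
Proof.
move=> mop mx0 mF; elim: r => [|i r IHr].
  by under eq_fun do rewrite big_nil.
by under eq_fun do rewrite big_cons; exact: mop.
Qed.

Lemma measurable_fun_fmax (I : finType) (F : I -> T -> R) :
  (forall i, measurable_fun setT (F i)) ->
  measurable_fun setT (fun w => fmax (F ^~ w)).
Proof.
move=> mF; apply: measurable_fun_big => //.
  exact: measurable_realfun.measurable_maxr.
by case: (enum I) => [|i r] /=.
Qed.

Lemma measurable_fun_fmin (I : finType) (F : I -> T -> R) :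
  (forall i, measurable_fun setT (F i)) ->
  measurable_fun setT (fun w => fmin (F ^~ w)).
Proof.
move=> mF; apply: measurable_fun_big => //.
  exact: measurable_realfun.measurable_minr.
by case: (enum I) => [|i r] /=.
Qed.

Lemma measurable_fun_sigma (mq m : nat) (A : 'I_mq -> 'I_m -> T -> R) :
  (forall i j, measurable_fun setT (A i j)) ->
  measurable_fun setT (fun w => sigma (\matrix_(i, j) A i j w)).
Proof.
move=> mA.
have mAij i j : measurable_fun setT (fun w => (\matrix_(i, j) A i j w) i j).
  by apply: (eq_measurable_fun (A i j)) => // w _; rewrite mxE.
apply: measurable_realfun.measurable_minr.
- by apply: measurable_fun_fmin => i; apply: measurable_fun_fmax.
- by apply: measurable_fun_fmin => j; apply: measurable_fun_fmax.
Qed.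

Lemma measurable_ge (x : R) (f : T -> R) :
  measurable_fun setT f -> measurable [set w | x <= f w].
Proof.
move=> mf; rewrite -[X in measurable X]setTI.
have -> : [set w | x <= f w] = f @^-1` `[x, +oo[ .
  by apply/seteqP; split => w /=; rewrite in_itv /= andbT.
exact: mf.
Qed.

End measurable_fmax.

Lemma measure_le_sum_cover {d} {T : measurableType d} {R : realType}
    (mu : {measure set T -> \bar R}) (n : nat) (A : set T) (F : 'I_n -> set T) :
  measurable A -> (forall i, measurable (F i)) -> A `<=` \bigcup_i F i ->
  (mu A <= \sum_(i < n) mu (F i))%E.
Proof.
case: n F => [|n] F mA mF AF.
  have -> : A = set0 by apply/seteqP; split => // w /AF [[]].
  by rewrite measure0 big_ord0.
pose G k := F (inord k).
have -> : \sum_(i < n.+1) mu (F i) = \sum_(k < n.+1) mu (G k).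
  by apply: eq_bigr => i _; rewrite /G inord_val.
apply: content_subadditive => // [k _|w /AF [i _ Fiw]]; first exact: mF.
rewrite -bigcup_mkord; exists (val i); first by rewrite /= ltn_ord.
by rewrite /G inord_val.
Qed.

Section binomial_tail.
Context {R : realType}.

Lemma binomial_prob0 (L : nat) (U : set nat) :
  binomial_prob L (0 : R) U = \d_0%N U.
Proof.
rewrite (@binomial_probE R L 0 (lexx 0) ler01) big_ord_recl big1 ?adde0 /=.
  by rewrite /unstable.onem subr0 subn0 !expr1n bin0 mulr1 mul1e.
by move=> k _; rewrite expr0n /= !mul0r mul0rn mul0e.
Qed.

Lemma binomial_pgf (L : nat) (p x : R) :
  \sum_(k < L.+1) binomial_pmf L p k * x ^+ k = (1 - p + p * x) ^+ L.
Proof.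
rewrite exprDn; apply: eq_bigr => k _.
rewrite /binomial_pmf /unstable.onem -mulr_natr -[RHS]mulr_natr exprMn.
ring.
Qed.

Lemma binomial_tail_chernoff (L : nat) (p tau t : R) :
  (0 < L)%N -> 0 <= p <= 1 -> 0 <= t ->
  (binomial_prob L p [set n : nat | (tau <= n%:R / L%:R)%R] <=
   ((expR (- (t * tau)) * (1 - p + p * expR t)) ^+ L)%:E)%E.
Proof.
move=> L0 /andP[p0 p1] t0.
rewrite (@binomial_probE R L p p0 p1) exprMn -binomial_pgf mulr_sumr -sumEFin.
apply: lee_sum => k _; rewrite diracE /=.
have pmf0 : 0 <= binomial_pmf L p k by rewrite binomial_pmf_ge0 ?p0.
case: (boolP (_ \in _)) => [|_]; last first.
  by rewrite mule0 lee_fin mulr_ge0 ?mulr_ge0 ?exprn_ge0 ?expR_ge0.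
rewrite inE /= ler_pdivlMr ?ltr0n // => tauL_le_k.
rewrite mule1 lee_fin mulrCA -[leLHS]mulr1 ler_wpM2l //.
rewrite -!expRM_natl -expRD -[leLHS]expR0 ler_expR.
have : 0 <= t * (k%:R - tau * L%:R) by rewrite mulr_ge0 // subr_ge0.
lra.
Qed.

Lemma binomial_tail_le (L : nat) (p s tau : R) :
  (0 < L)%N -> 0 <= p <= s -> s < tau < 1 ->
  (binomial_prob L p [set n : nat | (tau <= n%:R / L%:R)%R] <=
   ((((s * (1 - tau)) / (tau * (1 - s))) `^ tau * ((1 - s) / (1 - tau)))
      ^+ L)%:E)%E.
Proof.
move=> L0 /andP[p0 ps] /andP[st t1].
have [s0|s_neq0] := eqVneq s 0.
  have -> : p = 0 by lra.
  rewrite binomial_prob0 diracE memNset /=; last by rewrite mul0r; lra.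
  by rewrite lee_fin exprn_ge0 // mulr_ge0 ?powR_ge0 // divr_ge0; lra.
have s_gt0 : 0 < s by rewrite lt_neqAle eq_sym s_neq0 /=; lra.
set y := s * (1 - tau) / (tau * (1 - s)).
have y_gt0 : 0 < y by rewrite divr_gt0 ?mulr_gt0 //; lra.
have y_le1 : y <= 1 by rewrite ler_pdivrMr ?mul1r ?mulr_gt0 //; nra.
pose t := - ln y.
have t_ge0 : 0 <= t by rewrite oppr_ge0 ln_le0.
have powyE : y `^ tau = expR (- (t * tau)) by rewrite mulNr opprK expRM lnK.
have expR_tE : expR t = y^-1 by rewrite expRN lnK.
have baseE : (1 - s) / (1 - tau) = 1 - s + s * expR t.
  by rewrite expR_tE /y; field; apply/and4P; split; apply/eqP; lra.
rewrite powyE baseE.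
apply: le_trans (binomial_tail_chernoff L p tau t L0 _ t_ge0) _; first lra.
have expR_t_ge1 : 1 <= expR t by rewrite -[leLHS]expR0 ler_expR.
rewrite lee_fin !exprMn ler_wpM2l ?exprn_ge0 ?expR_ge0 // lerXn2r ?nnegrE; nra.
Qed.

End binomial_tail.

Theorem lemma2 (R : realType) (d : measure_display) (T : measurableType d)
  (P : probability T R) (mq m L : nat) (S : 'M[R]_(mq, m))
  (K : 'I_mq -> 'I_m -> {RV P >-> nat}) (tau1 : R) :
  (0 < mq)%N -> (0 < m)%N -> (0 < L)%N ->
  (forall i j, 0 <= S i j <= 1) ->
  (forall i j (U : set nat), measurable U ->
     distribution P (K i j) U = binomial_prob L (S i j) U) ->
  smax S < tau1 < 1 ->
  let s := smax S in
  let Delta1 := tau1 - s in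
  let gamma := ((s * (1 - tau1)) / (tau1 * (1 - s))) `^ tau1 *
               ((1 - s) / (1 - tau1)) in
  (P [set w | (s + Delta1 <=
              sigma (\matrix_(i, j) ((K i j w)%:R / L%:R) : 'M[R]_(mq, m)))%R]
   <= ((mq * m)%:R * gamma ^+ L)%:E)%E.
Proof.
move=> mq_gt0 m_gt0 L_gt0 S01 KS /andP[smax_lt_tau tau_lt1]; cbv zeta.
have -> : smax S + (tau1 - smax S) = tau1 by rewrite addrC subrK.
set gamma := _ `^ tau1 * _.
pose i0 : 'I_mq := Ordinal mq_gt0.
have mKij i j : measurable_fun setT (fun w => (K i j w)%:R / L%:R : R).
  exact: (@measurableT_comp _ _ _ _ _ _ (fun n : nat => n%:R / L%:R : R)).
pose tail_event j := [set w | (tau1 <= (K i0 j w)%:R / L%:R)%R].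
have tail_event_le j : (P (tail_event j) <= (gamma ^+ L)%:E)%E.
  have S_le_smax : S i0 j <= smax S.
    exact: (le_fmax (fun ij => S ij.1 ij.2) (i0, j)).
  have := S01 i0 j => /andP[S_ge0 _].
  rewrite -[P _]/(distribution P (K i0 j) [set n | (tau1 <= n%:R / L%:R)%R]).
  rewrite KS //.
  by apply: binomial_tail_le => //; apply/andP.
apply: le_trans (measure_le_sum_cover P m _ tail_event _ _ _) _.
- exact/measurable_ge/measurable_fun_sigma.
- by move=> j; exact: measurable_ge.
- move=> w /= /le_trans /(_ (sigma_le_fmax_row _ i0)).
  set Shat := \matrix_(i, j) _.
  have [j ->] := eq_fmax (Ordinal m_gt0) (Shat i0).
  by rewrite mxE; exists j.
apply: le_trans (lee_sum _ (fun j _ => tail_event_le j)) _.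
have gamma_ge0 : 0 <= gamma by rewrite mulr_ge0 ?powR_ge0 // divr_ge0 //; lra.
rewrite sumEFin lee_fin sumr_const card_ord -[leLHS]mulr_natl.
by rewrite ler_wpM2r ?exprn_ge0 // ler_nat leq_pmull.
Qed.
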